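(* Let $\mathbb{F}$ be a field, $m,b\in\mathbb{F}$ with $m\ne0$, $m\neq1$, let $\mathfrak{A}$ be the unital associative $\mathbb{F}$-algebra generated by $A,B$ subject to $AB=mBA+bI$, and let $C=AB-BA$. For every positive integer $k$, $$(1-m^{k+1})C^{k+1}=(1-m^k)\,b\,C^k-\frac{\big((\mathrm{ad}\,B)\circ(\mathrm{ad}\,C)^k\big)(A)}{(1-m)^{k-1}m^{-k}}.$$
   Context: $[P,Q]=PQ-QP$; for $U\in\mathfrak{A}$, $\mathrm{ad}\,U:\mathfrak{A}\to\mathfrak{A}$ is $V\mapsto[U,V]$, and $(\mathrm{ad}\,U)^k$ is its $k$-fold composition. *)

From HB Require Import structures.
From mathcomp Require Import all_boot all_order all_algebra.
Set Implicit Arguments. Unset Strict Implicit. Unset Printing Implicit Defensive.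
Import GRing.Theory.
Local Open Scope ring_scope.

Definition lie (R : pzRingType) (P Q : R) : R := P * Q - Q * P.

Definition ad (R : pzRingType) (U : R) : R -> R := fun V => lie U V.

From HB Require Import structures.
From mathcomp Require Import all_boot all_order all_algebra.
From mathcomp Require Import ring.
Import GRing.Theory.
Set Implicit Arguments. Unset Strict Implicit. Unset Printing Implicit Defensive.
Local Open Scope ring_scope.

(* From AB = m BA + b one gets (m - 1) BA = C - b and (m - 1) AB = m C - b
   for C = [A, B], so A and B both m-commute with C: AC = m CA and CB = m BC.
   Hence (ad C)^k A = (1 - m)^k C^k A, and pushing B through C^k turns
   m^k [B, C^k A] into C^k (BA - m^k AB), which is a polynomial in C. *)

Lemma adZ (R : comPzRingType) (Alg : algType R) (U : Alg) (c : R) (V : Alg) :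
  ad U (c *: V) = c *: ad U V.
Proof. by rewrite /ad /lie scalerBr -scalerAl -scalerAr. Qed.

Definition qcommute {R : pzRingType} {Alg : lalgType R} (q : R) (X Y : Alg) :=
  X * Y = q *: (Y * X).

Section QCommute.
Variables (R : comPzRingType) (Alg : algType R) (q : R) (X Y : Alg).
Hypothesis hXY : qcommute q X Y.

Lemma qcommute_exprl k : X ^+ k * Y = q ^+ k *: (Y * X ^+ k).
Proof.
elim: k => [|k IHk]; first by rewrite !expr0 scale1r mul1r mulr1.
by rewrite exprS -mulrA IHk -scalerAr [X * (Y * _)]mulrA hXY -scalerAl scalerA
  -exprSr mulrA.
Qed.

Lemma ad_exprl_qcommute k : ad Y (Y ^+ k * X) = (1 - q) *: (Y ^+ k.+1 * X).
Proof.
by rewrite /ad /lie -[Y ^+ k * X * Y]mulrA hXY -scalerAr !mulrA -exprS -exprSr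
  scalerBl scale1r.
Qed.

Lemma iter_ad_qcommute k : iter k (ad Y) X = (1 - q) ^+ k *: (Y ^+ k * X).
Proof.
elim: k => [|k IHk]; first by rewrite expr0 scale1r mul1r.
by rewrite iterS IHk adZ ad_exprl_qcommute scalerA -exprSr.
Qed.

End QCommute.

Section Relation.
Variables (R : comPzRingType) (Alg : algType R) (m b : R) (A B : Alg).
Hypothesis hrel : A * B = m *: (B * A) + b%:A.

Lemma lie_mulBA : lie A B = (m - 1) *: (B * A) + b%:A.
Proof. by rewrite /lie hrel scalerBl scale1r [LHS]addrAC. Qed.

Lemma scale_lie_mulAB : m *: lie A B = (m - 1) *: (A * B) + b%:A.
Proof.
have scaleBA : m *: (B * A) = A * B - b%:A by rewrite hrel addrK.
by rewrite /lie scalerBr scaleBA scalerBl scale1r opprB addrA [LHS]addrAC.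
Qed.

Lemma qcommute_lieA : qcommute m A (lie A B).
Proof.
rewrite /qcommute scalerAl scale_lie_mulAB lie_mulBA mulrDr mulrDl.
by rewrite -scalerAr -scalerAl mulr_algr mulr_algl mulrA.
Qed.

Lemma qcommute_lieB : qcommute m (lie A B) B.
Proof.
rewrite /qcommute scalerAr scale_lie_mulAB lie_mulBA mulrDr mulrDl.
by rewrite -scalerAr -scalerAl mulr_algr mulr_algl mulrA.
Qed.

Let C := lie A B.

Lemma scale_ad_expr_lie k :
  ((m - 1) * m ^+ k) *: ad B (C ^+ k * A)
    = (1 - m ^+ k.+1) *: C ^+ k.+1 - ((1 - m ^+ k) * b) *: C ^+ k.
Proof.
have pushB : m ^+ k *: ad B (C ^+ k * A) = C ^+ k * (B * A - m ^+ k *: (A * B)).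
  rewrite /ad /lie scalerBr mulrA scalerAl -(qcommute_exprl qcommute_lieB).
  by rewrite -!mulrA mulrBr scalerAr.
have scaleBA : (m - 1) *: (B * A) = C - b%:A by rewrite /C lie_mulBA addrK.
have scaleAB : (m - 1) *: (A * B) = m *: C - b%:A
  by rewrite /C scale_lie_mulAB addrK.
have polyC : (m - 1) *: (B * A - m ^+ k *: (A * B))
    = (1 - m ^+ k.+1) *: C - ((1 - m ^+ k) * b)%:A.
  rewrite scalerBr scalerA [(m - 1) * _]mulrC -[(m ^+ k * _) *: _]scalerA.
  rewrite scaleBA scaleAB scalerBr scalerA -exprSr.
  rewrite scalerBl scale1r mulrBl mul1r scalerBl -[(m ^+ k * b) *: _]scalerA.
  by rewrite !opprB [LHS]addrACA [RHS]addrACA [- b%:A - _]addrC.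
by rewrite -scalerA pushB scalerAr polyC mulrBr -scalerAr mulr_algr -exprSr.
Qed.

End Relation.

Theorem lemma4p6 (F : fieldType) (Alg : algType F) (m b : F)
    (hm0 : m != 0) (hm1 : m != 1) (A B : Alg)
    (hrel : A * B = m *: (B * A) + b%:A)
    (k : nat) (hk : (0 < k)%N) :
  let C := lie A B in
  (1 - m ^+ k.+1) *: C ^+ k.+1 =
    ((1 - m ^+ k) * b) *: C ^+ k
    - ((1 - m) ^+ k.-1 * m ^- k)^-1 *: ad B (iter k (ad C) A).
Proof.
move=> C; case: k hk => [//|k] _.
rewrite (iter_ad_qcommute (qcommute_lieA hrel)) adZ scalerA /=.
have -> : ((1 - m) ^+ k * m ^- k.+1)^-1 * (1 - m) ^+ k.+1
    = - ((m - 1) * m ^+ k.+1).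
  have m1_neq0 : 1 - m != 0 by rewrite subr_eq0 eq_sym.
  by rewrite !exprS; field; rewrite !expf_neq0 ?hm0.
by rewrite (scaleNr ((m - 1) * m ^+ k.+1)) opprK (scale_ad_expr_lie hrel)
  [RHS]addrC subrK.
Qed.
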